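(* Let $a,b,c,d\in\mathbb{K}$ with $a\ne b$ and $c\ne d$, and let $\mathcal R_1=(1-a\tau)(1-b\tau)^{-1}$ and $\mathcal R_2=(1-c\tau)^{-1}(1-d\tau)$ in $\mathbb{K}(\tau)$. Then $\mathcal R_1=\mathcal R_2$ if and only if $c=b[1]\ln'(a-b)$ and $d=a[1]\ln'(a-b)$; equivalently, if and only if $a[1]=d/\ln'(c-d)$ and $b[1]=c/\ln'(c-d)$.
   Context: Fix $h\in\mathbb{C}^\times$. $\mathbb{K}=\mathbb{C}(x)$; for $f\in\mathbb{K}$, $f[i](x)=f(x-ih)$ and $\ln'(f)=f/f[1]$. $\mathbb{K}[\tau]$ is the ring of difference operators $\sum_ja_j\tau^j$ ($a_j\in\mathbb{K}$) with $\tau f=f[1]\tau$, and $\mathbb{K}(\tau)$ is its division ring of fractions. *)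

From HB Require Import structures.
From mathcomp Require Import all_boot all_order all_algebra.
From mathcomp Require Import generic_quotient fraction.
From mathcomp Require Import reals complex.
Set Implicit Arguments. Unset Strict Implicit. Unset Printing Implicit Defensive.
Import Order.TTheory GRing.Theory Num.Theory.
Local Open Scope ring_scope.

(* K = C(x), rational functions over C, as the fraction field of C[x]. *)
Definition Kfield (R : realType) := {fraction {poly R[i]}}.

Definition shiftp (R : realType) (h : R[i]) (k : nat) (p : {poly R[i]})
  : {poly R[i]} := p \Po ('X - (k%:R * h)%:P).

(* f[k](x) = f(x - k h), for f in K = C(x) (computed on a representative
   numerator/denominator pair; independent of the representative). *)
Definition shiftK (R : realType) (h : R[i]) (k : nat) (f : Kfield R)
  : Kfield R :=
  let r := repr f in
  (tofrac (shiftp h k (\n_r))) / (tofrac (shiftp h k (\d_r))).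

Definition lnp (R : realType) (h : R[i]) (f : Kfield R) : Kfield R :=
  f / shiftK h 1 f.

From HB Require Import structures.
From mathcomp Require Import all_boot all_order all_algebra.
From mathcomp Require Import ring.
From mathcomp Require Import generic_quotient fraction reals complex.
Set Implicit Arguments. Unset Strict Implicit. Unset Printing Implicit Defensive.
Import Order.TTheory GRing.Theory Num.Theory.
Local Open Scope ring_scope.

(* Multiplying out the inverses, R1 = R2 iff
   (1 - c t)(1 - a t) = (1 - d t)(1 - b t).  Expanding with t f = f[1] t and
   comparing the coefficients of t and t^2 turns this into the linear system
   c + a = d + b, c a[1] = d b[1].  Since f |-> f[1] is additive and
   injective, this system can be solved either for (c, d), which needs
   a - b != 0, or for (a[1], b[1]), which needs c - d != 0. *)

Lemma mulrV_eq_Vmulr (R : unitRingType) (x y z w : R) :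
  y \is a GRing.unit -> z \is a GRing.unit ->
  (x * y^-1 = z^-1 * w) <-> (z * x = w * y).
Proof.
move=> yU zU; split=> E.
  by rewrite -[x](mulrVK yU) mulrA E mulVKr.
by rewrite -[x](mulKr zU) E -mulrA mulrK.
Qed.

Section LinearSystem.
Variables (K : fieldType) (sh : K -> K).
Hypothesis shB : forall f g, sh (f - g) = sh f - sh g.
Hypothesis sh_inj : injective sh.

Let sh_subr_neq0 f g : f != g -> sh f - sh g != 0.
Proof.
have sh0 : sh 0 = 0 by have := shB 0 0; rewrite !subrr.
move=> fg; rewrite -shB; apply: contra fg => /eqP.
by rewrite -sh0 => /sh_inj/eqP; rewrite subr_eq0.
Qed.

Lemma shift_system_solve_left (a b c d : K) : a != b ->
  (c + a = d + b /\ c * sh a = d * sh b) <->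
  (c = sh b * ((a - b) / sh (a - b)) /\ d = sh a * ((a - b) / sh (a - b))).
Proof.
move=> ab; have := sh_subr_neq0 ab; rewrite shB => sab.
have ab0 : a - b != 0 by rewrite subr_eq0.
split=> [[cad cd]|[-> ->]]; last by split; field.
have dE : d = c + a - b by rewrite cad addrK.
have cE : c * (sh a - sh b) = (a - b) * sh b.
  by rewrite mulrBr cd -mulrBl dE; congr (_ * _); ring.
have {}cE : c = sh b * ((a - b) / (sh a - sh b)).
  by rewrite -[LHS](mulfK sab) cE; field.
by split=> //; rewrite dE cE; field.
Qed.

Lemma shift_system_solve_right (a b c d : K) : c != d ->
  (c + a = d + b /\ c * sh a = d * sh b) <->
  (sh a = d / ((c - d) / sh (c - d)) /\ sh b = c / ((c - d) / sh (c - d))).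
Proof.
move=> cd; have := sh_subr_neq0 cd; rewrite shB => scd.
have cd0 : c - d != 0 by rewrite subr_eq0.
split=> [[cad cdE]|[aE bE]].
  have shab : sh a - sh b = sh d - sh c.
    by rewrite -!shB; congr sh; transitivity (c + a - (b + c)); [ring | rewrite cad; ring].
  have {}shab : sh b = sh a + (sh c - sh d) by rewrite -[sh a](subrK (sh b)) shab; ring.
  have aE : sh a * (c - d) = d * (sh c - sh d).
    by rewrite mulrC mulrBl cdE shab; ring.
  have {}aE : sh a = d * (sh c - sh d) / (c - d) by rewrite -aE mulfK.
  by rewrite shab aE; split; field; rewrite scd cd0.
have shab : sh (a - b) = sh (d - c) by rewrite !shB aE bE; field; rewrite scd cd0.
split; last by rewrite aE bE; field; rewrite scd cd0.
apply/eqP; rewrite -subr_eq0 -(subrr (a - b)) {2}(sh_inj shab); apply/eqP; ring.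
Qed.

End LinearSystem.

Section OreEmbedding.
Variables (K : fieldType) (D : unitRingType).
Hypothesis D_div : forall u : D, u != 0 -> u \is a GRing.unit.
Variables (iota : {rmorphism K -> D}) (t : D) (sh : K -> K).
Hypothesis t_comm : forall f : K, t * iota f = iota (sh f) * t.
Hypothesis t_free : forall (n : nat) (s : 'I_n -> K),
  \sum_(i < n) iota (s i) * t ^+ i = 0 -> forall i, s i = 0.

Lemma tpoly_coef_inj n (s1 s2 : 'I_n -> K) :
  \sum_(i < n) iota (s1 i) * t ^+ i = \sum_(i < n) iota (s2 i) * t ^+ i ->
  s1 =1 s2.
Proof.
move=> E i; apply/eqP; rewrite -subr_eq0; apply/eqP; move: i.
apply: (t_free (s := fun i => s1 i - s2 i)).
by under eq_bigr do rewrite rmorphB mulrBl; rewrite sumrB E subrr.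
Qed.

Lemma tquad_coef_inj p0 p1 p2 q0 q1 q2 :
  iota p0 + iota p1 * t + iota p2 * t ^+ 2 =
  iota q0 + iota q1 * t + iota q2 * t ^+ 2 ->
  [/\ p0 = q0, p1 = q1 & p2 = q2].
Proof.
move=> E; have := @tpoly_coef_inj 3 (nth 0 [:: p0; p1; p2]) (nth 0 [:: q0; q1; q2]).
rewrite !big_ord_recl big_ord0 /= expr0 !mulr1 !addr0 !addrA => /(_ E) coefE.
by split; [exact: (coefE ord0) | exact: (coefE (@Ordinal 3 1 isT))
          | exact: (coefE (@Ordinal 3 2 isT))].
Qed.

Lemma tmul_inj f g : iota f * t = iota g * t -> f = g.
Proof.
move=> E; have [] // := @tquad_coef_inj 0 f 0 0 g 0.
by rewrite !rmorph0 !mul0r !addr0 !add0r.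
Qed.

Lemma t_unit : t \is a GRing.unit.
Proof.
apply: D_div; apply/eqP => t0.
by have := @tmul_inj 1 0; rewrite t0 !mulr0 => /(_ erefl) /eqP; rewrite oner_eq0.
Qed.

Lemma shB f g : sh (f - g) = sh f - sh g.
Proof. by apply: tmul_inj; rewrite -t_comm !rmorphB mulrBr !t_comm mulrBl. Qed.

Lemma sh_inj : injective sh.
Proof.
move=> f g E; apply/eqP; rewrite -subr_eq0 -(fmorph_eq0 iota) rmorphB.
by rewrite -(mulrI_eq0 _ (mulrI t_unit)) mulrBr !t_comm E subrr.
Qed.

Lemma unit_1_sub_iota_t f : 1 - iota f * t \is a GRing.unit.
Proof.
apply: D_div; apply/eqP => E.
have [] // := @tquad_coef_inj 1 (- f) 0 0 0 0; last by move/eqP; rewrite oner_eq0.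
by rewrite !rmorph0 !mul0r !addr0 rmorph1 rmorphN mulNr.
Qed.

Lemma mul_1_sub_iota_t f g : (1 - iota f * t) * (1 - iota g * t)
  = iota 1 + iota (- (f + g)) * t + iota (f * sh g) * t ^+ 2.
Proof.
rewrite mulrBr mulr1 mulrBl mul1r -mulrA (mulrA t) t_comm !mulrA -rmorphM.
rewrite -mulrA -expr2 rmorph1 rmorphN rmorphD mulNr mulrDl opprD !addrA.
by rewrite opprK opprD addrA.
Qed.

Lemma factorizations_eq a b c d :
  (1 - iota a * t) * (1 - iota b * t)^-1 = (1 - iota c * t)^-1 * (1 - iota d * t)
  <-> (c + a = d + b /\ c * sh a = d * sh b).
Proof.
rewrite mulrV_eq_Vmulr ?unit_1_sub_iota_t // !mul_1_sub_iota_t.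
split=> [/tquad_coef_inj[_ /oppr_inj -> ->] //|[-> ->] //].
Qed.

End OreEmbedding.

Theorem lemma2p2 (R : realType) (h : R[i]) (h_neq0 : h != 0)
  (a b c d : Kfield R) (hab : a != b) (hcd : c != d)
  (D : unitRingType)
  (D_div : forall u : D, u != 0 -> u \is a GRing.unit)
  (iota : {rmorphism Kfield R -> D}) (t : D)
  (t_comm : forall f : Kfield R, t * iota f = iota (shiftK h 1 f) * t)
  (t_free : forall (n : nat) (s : 'I_n -> Kfield R),
      \sum_(i < n) iota (s i) * t ^+ i = 0 -> forall i, s i = 0) :
  let R1 := (1 - iota a * t) * (1 - iota b * t)^-1 in
  let R2 := (1 - iota c * t)^-1 * (1 - iota d * t) in
  (R1 = R2 <-> c = shiftK h 1 b * lnp h (a - b) /\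
               d = shiftK h 1 a * lnp h (a - b)) /\
  (R1 = R2 <-> shiftK h 1 a = d / lnp h (c - d) /\
               shiftK h 1 b = c / lnp h (c - d)).
Proof.
rewrite /= /lnp (factorizations_eq D_div t_comm t_free).
move: (shB t_comm t_free) (sh_inj D_div t_comm t_free) => shiftB shift_inj.
by split; [apply: shift_system_solve_left | apply: shift_system_solve_right].
Qed.
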